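(* Let ${\mathbb K}$ be a field, $n\geqslant 2$, $N$ and $r$ positive integers. Let $L$ be a set of lines of $\mathrm{AG}_n({\mathbb K})$, let $D\subseteq\mathrm{PG}_{n-1}({\mathbb K})$ be the set of directions of the lines of $L$, and let $S$ be a set of points of $\mathrm{AG}_n({\mathbb K})$ such that every line of $L$ is incident with at least $N$ points of $S$. If $U$ is a subspace of ${\mathbb K}[X_1,\ldots,X_n]$ of polynomials of degree at most $rN-1$ with the property that $f^*\notin I_r(D)$ for all non-zero $f\in U$, then $$\binom{2r+n-2}{n}|S|\geqslant\dim U.$$
   Context: The direction of an affine line $\{u+\lambda v\}$ is the point $\langle v\rangle$ of $\mathrm{PG}_{n-1}({\mathbb K})$. For $j,c\in({\mathbb Z}_{\geqslant0})^n$ the $j$-Hasse derivative of $X^c=\prod_i X_i^{c_i}$ is $\partial^j(X^c)=\prod_{i=1}^n\binom{c_i}{j_i}X_i^{c_i-j_i}$ (with $\binom{a}{b}=0$ if $b>a$), extended linearly to polynomials; $\mathrm{wt}(j)=\sum_i j_i$. A polynomial $f$ has a zero of multiplicity $m$ at a point $u\in{\mathbb K}^n$ if $(\partial^j f)(u)=0$ for all $j$ with $\mathrm{wt}(j)\leqslant m-1$. $I_r(D)$ denotes the ideal of homogeneous polynomials of ${\mathbb K}[X_1,\ldots,X_n]$ which have zeros of multiplicity at least $r$ at all points of $D$ (i.e. at vectors $v$ with $\langle v\rangle\in D$). For $f\in{\mathbb K}[X_1,\ldots,X_n]$, $f^*$ denotes the sum of the terms of $f$ of highest total degree; degree means total degree.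 *)

From HB Require Import structures.
From mathcomp Require Import all_boot all_order all_algebra.
From mathcomp Require Export mpoly.

Set Implicit Arguments.
Unset Strict Implicit.
Unset Printing Implicit Defensive.

Import GRing.Theory.
Local Open Scope ring_scope.

Section Defs.
Variables (K : fieldType) (n : nat).

Definition pt := 'rV[K]_n.

Definition peval (f : {mpoly K[n]}) (x : pt) : K := f.@[fun i => x 0 i].

Definition on_line (u v x : pt) : Prop := exists lam : K, x = u + lam *: v.

(* The j-Hasse derivative:
   d^j (X^c) = prod_i binom(c_i, j_i) X^(c - j), extended linearly.
   (When some j_i > c_i the binomial product is 0, so the truncated
   monomial subtraction is harmless.) *)
Definition hasse (j : 'X_{1..n}) (f : {mpoly K[n]}) : {mpoly K[n]} :=
  \sum_(c <- msupp f)
     (f@_c * ((\prod_(i < n) 'C(c i, j i))%N)%:R) *: 'X_[(c - j)%MM].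

Definition zero_mult (f : {mpoly K[n]}) (m : nat) (u : pt) : Prop :=
  forall j : 'X_{1..n}, (mdeg j < m)%N -> peval (hasse j f) u = 0.

(* A set of lines is given by parametrisations (u, v), v <> 0. *)
Definition lineset := pt * pt -> Prop.

(* Directions: the set D of points <v> of PG_{n-1}(K); a vector w
   represents a point of D iff w is a nonzero multiple of the direction
   vector of some line of L. *)
Definition in_directions (L : lineset) (w : pt) : Prop :=
  exists u v (c : K), L (u, v) /\ c != 0 /\ w = c *: v.

Definition in_Ir (r : nat) (L : lineset) (f : {mpoly K[n]}) : Prop :=
  (exists d, f \is d.-homog) /\
  forall w, in_directions L w -> zero_mult f r w.

Definition fstar (f : {mpoly K[n]}) : {mpoly K[n]} :=
  \sum_(c <- msupp f | mdeg c == (msize f).-1) f@_c *: 'X_[c].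

Definition subspace (U : {mpoly K[n]} -> Prop) : Prop :=
  U 0 /\ forall (a : K) f g, U f -> U g -> U (a *: f + g).

Definition lin_indep (s : seq {mpoly K[n]}) : Prop :=
  forall c : 'I_(size s) -> K,
    \sum_(i < size s) c i *: s`_i = 0 -> forall i, c i = 0.

Definition dim_le (U : {mpoly K[n]} -> Prop) (d : nat) : Prop :=
  forall s : seq {mpoly K[n]}, (forall f, f \in s -> U f) -> lin_indep s ->
    (size s <= d)%N.

End Defs.

(* If dim U exceeded C(2r+n-2, n)|S|, a nonzero f in U would vanish to order
   2r-1 at every point of S: each point imposes C(2r-2+n, n) linear conditions,
   one per Hasse derivative of order at most 2r-2.  Fix a line {u + λv} of L and
   j with |j| < r.  By the Taylor formula f(x + y) = Σ_i (∂^i f)(x) y^i and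
   ∂^i ∂^j = C(i+j, i) ∂^(i+j), the univariate polynomial λ ↦ (∂^j f)(u + λv)
   has a root of multiplicity 2r-1-|j| at each of the N parameters of points of
   S on the line, but degree below rN - |j| <= (2r-1-|j|)N, so it is zero.  Its
   coefficient of λ^(deg f - |j|) is (∂^j f^* )(v), hence f^* is in I_r(D). *)

From HB Require Import structures.
From mathcomp Require Import all_boot all_order all_algebra.
From mathcomp Require Import mpoly ssrcomplements.
From mathcomp Require Import zify ring.

Set Implicit Arguments.
Unset Strict Implicit.
Unset Printing Implicit Defensive.

Import GRing.Theory.
Local Open Scope ring_scope.

Lemma bin_mul_bin (c j i : nat) :
  ('C(c, j) * 'C(c - j, i) = 'C(c, i + j) * 'C(i + j, i))%N.
Proof.
have [le_jc|lt_cj] := leqP j c; last first.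
  by rewrite (bin_small lt_cj) (@bin_small c (i + j)) ?mul0n //; lia.
have [le_i_cj|lt_cj_i] := leqP i (c - j); last first.
  by rewrite (bin_small lt_cj_i) muln0 (@bin_small c (i + j)) ?mul0n //; lia.
have le_ij_c : (i + j <= c)%N by lia.
have f1 := bin_fact le_jc.
have f2 := bin_fact le_i_cj.
have f3 := bin_fact le_ij_c.
have f4 := bin_fact (leq_addr j i).
rewrite (_ : i + j - i = j)%N in f4; last by lia.
rewrite (_ : c - j - i = c - (i + j))%N in f2; last by lia.
have facts_gt0 : (0 < i`! * j`! * (c - (i + j))`!)%N by rewrite !muln_gt0 !fact_gt0.
apply/eqP; rewrite -(eqn_pmul2r facts_gt0); apply/eqP.
transitivity c`!; first by rewrite -f1 -f2; ring.
by rewrite -f3 -f4; ring.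
Qed.

Lemma coefM_top (R : nzRingType) (p q : {poly R}) a b :
  (size p <= a.+1)%N -> (size q <= b.+1)%N ->
  (size (p * q)%R <= (a + b).+1)%N /\ (p * q)`_(a + b) = p`_a * q`_b.
Proof.
move=> size_p size_q; split; first by apply: leq_trans (size_polyMleq _ _) _; lia.
have lt_a : (a < (a + b).+1)%N by lia.
rewrite coefM (bigD1 (Ordinal lt_a)) //= addKn big1 ?addr0 // => i /eqP ne_ia.
have [lt_ia|le_ai] := ltnP i a.
  by rewrite [q`__]nth_default ?mulr0 //; apply: leq_trans size_q _; lia.
rewrite [p`__]nth_default ?mul0r //; apply: leq_trans size_p _.
have : nat_of_ord i <> a by move=> e; apply: ne_ia; apply: val_inj.
lia.
Qed.

Lemma eq0_of_dvdp_XsubC_exp (R : fieldType) (p : {poly R}) (rs : seq R) m :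
  uniq rs -> (forall a, a \in rs -> ('X - a%:P) ^+ m %| p) ->
  (size p <= m * size rs)%N -> p = 0.
Proof.
move=> uniq_rs dvd_p size_p.
have dvd_qp : (\prod_(a <- rs) ('X - a%:P)) ^+ m %| p.
  elim: rs uniq_rs dvd_p {size_p} => [|a rs IHrs] /=.
    by rewrite big_nil expr1n dvd1p.
  case/andP => a_rs uniq_rs dvd_p.
  rewrite big_cons exprMn Gauss_dvdp; last first.
    rewrite coprimep_expl // coprimep_expr // coprimep_sym.
    by rewrite coprimep_XsubC root_prod_XsubC.
  rewrite dvd_p ?mem_head //=; apply: IHrs => // b b_rs.
  by apply: dvd_p; rewrite in_cons b_rs orbT.
set q := _ ^+ m in dvd_qp.
have size_q : size q = (m * size rs).+1.
  have q_neq0 : q != 0 by rewrite expf_neq0 // monic_neq0 // monic_prod_XsubC.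
  have := size_exp (\prod_(a <- rs) ('X - a%:P)) m.
  rewrite -/q size_prod_XsubC /= mulnC => <-.
  by rewrite prednK // size_poly_gt0.
apply/eqP; apply: contraTT size_p => p_neq0.
by rewrite -ltnNge -size_q; apply: dvdp_leq.
Qed.

Section HasseDerivatives.
Variables (K : fieldType) (n : nat).
Implicit Types (f g : {mpoly K[n]}) (c i j m : 'X_{1..n}).

Definition mbin c j : nat := (\prod_(l < n) 'C(c l, j l))%N.

Lemma mbin_eq0 c j : ~~ (j <= c)%MM -> mbin c j = 0%N.
Proof.
move=> not_le_jc; have [l lt_cj] : exists l, (c l < j l)%N.
  apply/existsP; apply: contraR not_le_jc => /existsPn lt_jc.
  by apply/mnm_lepP => l; rewrite leqNgt lt_jc.
by rewrite /mbin (bigD1 l) //= bin_small // mul0n.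
Qed.

Lemma mbin_mul c j i : (mbin c j * mbin (c - j) i = mbin c (i + j) * mbin (i + j) i)%N.
Proof.
rewrite /mbin -!big_split /=; apply: eq_bigr => l _.
by rewrite !mnmE bin_mul_bin.
Qed.

Lemma leq_mnm_mdeg m l : (m l <= mdeg m)%N.
Proof. by rewrite mdegE (bigD1 l) //= leq_addr. Qed.

Lemma lem_mdeg c j : (j <= c)%MM -> (mdeg j <= mdeg c)%N.
Proof. by move=> le_jc; rewrite -(submK le_jc) mdegD leq_addl. Qed.

Lemma mdeg_subm c j : (j <= c)%MM -> mdeg (c - j) = (mdeg c - mdeg j)%N.
Proof. by move=> le_jc; rewrite -{2}(submK le_jc) mdegD addnK. Qed.

Lemma hasse_bmnmE j f k : (msize f <= k)%N ->
  hasse j f = \sum_(c : 'X_{1..n < k}) (f@_c * (mbin c j)%:R) *: 'X_[c - j].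
Proof.
move=> le_fk; pose I : subFinType _ := 'X_{1..n < k}.
rewrite /hasse (big_mksub I) //=; first last.
- by move=> c /msize_mdeg_lt /leq_trans; apply.
- exact: msupp_uniq.
by rewrite big_rmcond //= => c /memN_msupp_eq0 ->; rewrite mul0r scale0r.
Qed.

Lemma hasse_is_linear j : linear (@hasse K n j).
Proof.
move=> a f g; pose k := (msize f + msize g + msize (a *: f + g))%N.
rewrite !(@hasse_bmnmE j _ k) ?/k; try lia.
rewrite scaler_sumr -big_split /=; apply: eq_bigr => c _.
by rewrite mcoeffD mcoeffZ scalerA -scalerDl mulrDl mulrA.
Qed.

HB.instance Definition _ j :=
  GRing.isLinear.Build K {mpoly K[n]} {mpoly K[n]} _ (@hasse K n j)
    (hasse_is_linear j).

Lemma hasseX j m : hasse j 'X_[m] = (mbin m j)%:R *: 'X_[m - j] :> {mpoly K[n]}.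
Proof. by rewrite /hasse msuppX big_seq1 mcoeffX eqxx mul1r. Qed.

Lemma hasse_comp i j f : hasse i (hasse j f) = (mbin (i + j) i)%:R *: hasse (i + j) f.
Proof.
rewrite !(@hasse_bmnmE _ f (msize f)) // linear_sum scaler_sumr /=.
apply: eq_bigr => c _; rewrite linearZ /= hasseX !scalerA submDA [(j + i)%MM]addmC.
by congr (_ *: _); rewrite -mulrA -natrM mbin_mul natrM; ring.
Qed.

Lemma peval_hasse_is_scalar j (x : pt K n) : scalar (fun f => peval (hasse j f) x).
Proof. by move=> a f g; rewrite /peval linearP mevalD mevalZ. Qed.

End HasseDerivatives.

Section Taylor.
Variables (R : comNzRingType) (n : nat).

Lemma big_ffun_bmnm (G : 'I_n -> nat -> R) (c : 'X_{1..n}) k :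
  (mdeg c < k)%N -> (forall l e, (c l < e)%N -> G l e = 0) ->
  \sum_(phi : {ffun 'I_n -> 'I_k}) \prod_(l < n) G l (phi l) =
  \sum_(i : 'X_{1..n < k}) \prod_(l < n) G l (i l).
Proof.
case: k => [//|k] lt_ck G0.
have lt_ik (i : 'X_{1..n < k.+1}) l : (i l < k.+1)%N.
  exact: leq_ltn_trans (leq_mnm_mdeg _ l) (bmdeg i).
pose h (i : 'X_{1..n < k.+1}) : {ffun 'I_n -> 'I_k.+1} := [ffun l => inord (i l)].
have h_inj : injective h.
  move=> i1 i2 /ffunP e; apply: val_inj; apply/mnmP => l.
  by move: (e l); rewrite !ffunE => /(congr1 val) /=; rewrite !inordK.
rewrite (bigID (mem (h @: setT))) /= [X in _ + X]big1 ?addr0; last first.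
  move=> phi phi_h.
  suff [l lt_c_phi] : exists l, (c l < phi l)%N.
    by rewrite (bigD1 l) //= G0 // mul0r.
  apply/existsP; apply: contraR phi_h => /existsPn le_phi_c.
  have lt_phi : (mdeg [multinom (phi l : nat) | l < n] < k.+1)%N.
    apply: leq_ltn_trans lt_ck; rewrite !mdegE; apply: leq_sum => l _.
    by rewrite mnmE leqNgt le_phi_c.
  apply/imsetP; exists (BMultinom lt_phi) => //; apply/ffunP => l.
  by apply: val_inj; rewrite ffunE /= mnmE inordK.
rewrite big_imset /=; last by move=> i1 i2 _ _ /h_inj.
apply: eq_big => [i|i _]; first by rewrite in_setT.
by apply: eq_bigr => l _; rewrite ffunE inordK.
Qed.

Lemma mmap1_addE (A B : 'I_n -> R) (c : 'X_{1..n}) k : (mdeg c < k)%N ->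
  mmap1 (fun l => A l + B l) c =
  \sum_(i : 'X_{1..n < k}) (mbin c i)%:R * mmap1 A (c - i) * mmap1 B i.
Proof.
move=> lt_ck.
pose G l e := ('C(c l, e))%:R * A l ^+ (c l - e) * B l ^+ e.
have G0 l e : (c l < e)%N -> G l e = 0 by move=> lt_ce; rewrite /G bin_small ?mul0r.
have expand l : (A l + B l) ^+ c l = \sum_(e < k) G l e.
  have le_ck : ((c l).+1 <= k)%N := leq_ltn_trans (leq_mnm_mdeg c l) lt_ck.
  rewrite exprDn.
  rewrite (big_ord_widen _ (fun e => A l ^+ (c l - e) * B l ^+ e *+ 'C(c l, e)) le_ck).
  rewrite big_mkcond /=; apply: eq_bigr => e _; case: ifP => [_|].
    by rewrite /G mulr_natl mulrnAl.
  by rewrite ltnS => /negbT; rewrite -ltnNge => /G0 ->.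
rewrite /mmap1 (eq_bigr _ (fun l _ => expand l)) bigA_distr_bigA /=.
rewrite (big_ffun_bmnm lt_ck G0); apply: eq_bigr => i _.
by rewrite /mbin natr_prod -!big_split /=; apply: eq_bigr => l _; rewrite /G mnmBE.
Qed.

End Taylor.

Section LineRestriction.
Variables (K : fieldType) (n : nat).
Implicit Types (f g : {mpoly K[n]}) (i j : 'X_{1..n}).

Definition meval_poly (A : 'I_n -> {poly K}) f : {poly K} := mmap (@polyC K) A f.

Lemma meval_poly_hasse A j f k : (msize f <= k)%N ->
  meval_poly A (hasse j f) =
  \sum_(c : 'X_{1..n < k}) (f@_c * (mbin c j)%:R)%:P * mmap1 A (c - j).
Proof.
move=> le_fk; rewrite /meval_poly (hasse_bmnmE j le_fk) raddf_sum /=.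
by apply: eq_bigr => c _; rewrite mmapZ mmapX.
Qed.

Lemma meval_poly_taylor A B f k : (msize f <= k)%N ->
  meval_poly (fun l => A l + B l) f =
  \sum_(i : 'X_{1..n < k}) meval_poly A (hasse i f) * mmap1 B i.
Proof.
move=> le_fk.
under [RHS]eq_bigr => i _ do rewrite (meval_poly_hasse _ _ le_fk) mulr_suml.
rewrite /meval_poly (mmapE _ le_fk) exchange_big /=; apply: eq_bigr => c _.
rewrite (mmap1_addE A B (bmdeg c)) mulr_sumr; apply: eq_bigr => i _.
by rewrite rmorphM /= rmorph_nat; ring.
Qed.

Lemma meval_poly_const (x : 'I_n -> K) f :
  meval_poly (fun l => (x l)%:P) f = (f.@[x])%:P.
Proof.
rewrite /meval_poly /mmap mevalE rmorph_sum /=; apply: eq_bigr => c _.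
rewrite rmorphM rmorph_prod /mmap1; congr (_ * _).
by apply: eq_bigr => l _; rewrite rmorphXn.
Qed.

Definition line_poly (u w : 'I_n -> K) l : {poly K} := (u l)%:P + (w l)%:P * 'X.

Lemma size_line_poly u w l : (size (line_poly u w l) <= 2)%N.
Proof.
apply/leq_sizeP => e le2e; rewrite coefD coefC coefCM coefX.
have [-> ->] : (e == 1)%N = false /\ (e == 0)%N = false by split; apply/eqP; lia.
by rewrite mulr0 addr0.
Qed.

Lemma coef1_line_poly u w l : (line_poly u w l)`_1 = w l.
Proof. by rewrite coefD coefC coefCM coefX mulr1 add0r. Qed.

Lemma mmap1_line_top u w m :
  (size (mmap1 (line_poly u w) m) <= (mdeg m).+1)%N /\
  (mmap1 (line_poly u w) m)`_(mdeg m) = \prod_(l < n) w l ^+ m l.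
Proof.
have pow l e : (size (line_poly u w l ^+ e) <= e.+1)%N /\
               (line_poly u w l ^+ e)`_e = w l ^+ e.
  elim: e => [|e [size_e coef_e]]; first by rewrite !expr0 size_poly1 coefC.
  have [size_e1 coef_e1] := coefM_top size_e (size_line_poly u w l).
  rewrite addn1 -exprSr in size_e1 coef_e1.
  by rewrite size_e1 coef_e1 coef_e coef1_line_poly -exprSr.
rewrite /mmap1 mdegE; elim: (index_enum _) => [|l s [size_s coef_s]].
  by rewrite !big_nil size_poly1 coefC.
rewrite !big_cons; have [size_l coef_l] := coefM_top (pow l (m l)).1 size_s.
by rewrite size_l coef_l coef_s (pow l (m l)).2.
Qed.

Lemma fstarE f :
  fstar f = \sum_(c : 'X_{1..n < msize f})
              (if mdeg c == (msize f).-1 then f@_c else 0) *: 'X_[c].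
Proof.
pose I : subFinType _ := 'X_{1..n < msize f}.
rewrite /fstar big_mkcond /= (big_mksub I) //=; first last.
- by move=> c /msize_mdeg_lt.
- exact: msupp_uniq.
rewrite big_rmcond //= => [|c /memN_msupp_eq0 ->]; last by rewrite scale0r; case: ifP.
by apply: eq_bigr => c _; case: ifP => _; rewrite ?scale0r.
Qed.

Lemma fstar_homog f : fstar f \is (msize f).-1.-homog.
Proof.
rewrite fstarE rpred_sum // => c _; case: eqP => [deg_c|_]; last by rewrite scale0r rpred0.
by rewrite rpredZ // dhomogX; apply/eqP.
Qed.

Lemma size_line_hasse u w j f :
  (size (meval_poly (line_poly u w) (hasse j f)) <= msize f - mdeg j)%N.
Proof.
rewrite (meval_poly_hasse _ _ (leqnn (msize f))).
apply/leq_sizeP => e le_e; rewrite coef_sum big1 // => c _; rewrite coefCM.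
have [le_jc|not_le_jc] := boolP (j <= c)%MM; last by rewrite mbin_eq0 // mulr0 mul0r.
rewrite [_`_e]nth_default ?mulr0 //; apply: leq_trans (mmap1_line_top u w _).1 _.
by rewrite mdeg_subm //; have := bmdeg c; have := lem_mdeg le_jc; lia.
Qed.

Lemma coef_line_hasse u w j f :
  (meval_poly (line_poly u w) (hasse j f))`_((msize f).-1 - mdeg j) =
  (hasse j (fstar f)).@[w].
Proof.
rewrite (meval_poly_hasse _ _ (leqnn (msize f))) fstarE [hasse j _]linear_sum.
rewrite raddf_sum coef_sum /=.
apply: eq_bigr => c _; rewrite linearZ /= hasseX !mevalZ mevalX coefCM.
have [le_jc|not_le_jc] := boolP (j <= c)%MM; last by rewrite mbin_eq0 // !(mulr0, mul0r).
have [size_c top_c] := mmap1_line_top u w (c - j).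
rewrite mdeg_subm // in size_c top_c; case: eqP => [deg_c|deg_c].
  by rewrite deg_c in top_c; rewrite top_c; ring.
rewrite [_`__]nth_default ?mulr0 ?mul0r //; apply: leq_trans size_c _.
by have := bmdeg c; have := lem_mdeg le_jc; move: deg_c; rewrite -!subn1; lia.
Qed.

(* Taylor expansion of g at x with increment w (X - λ): the terms of order
   below m vanish and the others are multiples of (X - λ)^m. *)
Lemma XsubC_exp_dvdp_line g (u w x : 'I_n -> K) (lam : K) m :
  (forall l, x l = u l + lam * w l) ->
  (forall i, (mdeg i < m)%N -> (hasse i g).@[x] = 0) ->
  ('X - lam%:P) ^+ m %| meval_poly (line_poly u w) g.
Proof.
move=> x_def vanish.
have -> : meval_poly (line_poly u w) g =
          meval_poly (fun l => (x l)%:P + (w l)%:P * ('X - lam%:P)) g.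
  rewrite /meval_poly /mmap; apply: eq_bigr => c _; congr (_ * _).
  by apply: mmap1_eq => l; rewrite /line_poly x_def polyCD polyCM; ring.
rewrite (meval_poly_taylor _ _ (leqnn (msize g))).
apply: (big_ind (fun q => ('X - lam%:P) ^+ m %| q)) => [||p _];
  [exact: dvdp0 | exact: dvdp_add |].
rewrite meval_poly_const; have [lt_im|le_mi] := ltnP (mdeg p) m.
  by rewrite vanish // mul0r dvdp0.
have -> : mmap1 (fun l => (w l)%:P * ('X - lam%:P)) p =
          (\prod_(l < n) w l ^+ p l)%:P * ('X - lam%:P) ^+ mdeg p.
  rewrite /mmap1 rmorph_prod /= mdegE -prodrXr -big_split /=.
  by apply: eq_bigr => l _; rewrite exprMn rmorphXn.
by rewrite dvdp_mull // dvdp_mull // dvdp_exp2l.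
Qed.

Lemma line_params (u w : pt K n) (T : seq (pt K n)) :
  uniq T -> (forall x, x \in T -> on_line u w x) ->
  exists2 ls : seq K, uniq ls /\ size ls = size T &
    forall a, a \in ls -> u + a *: w \in T.
Proof.
elim: T => [|x T IHT] /=; first by exists [::].
case/andP => x_T uniq_T on_xT.
have /(IHT uniq_T) [ls [uniq_ls size_ls] ls_T] : forall y, y \in T -> on_line u w y.
  by move=> y y_T; apply: on_xT; rewrite in_cons y_T orbT.
have [lam x_def] := on_xT x (mem_head _ _).
exists (lam :: ls).
  split; last by rewrite /= size_ls.
  by rewrite /= uniq_ls andbT; apply: contra x_T => /ls_T; rewrite -x_def.
move=> a; rewrite in_cons => /predU1P [->|/ls_T a_T]; first by rewrite -x_def mem_head.
by rewrite in_cons a_T orbT.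
Qed.

Lemma hasse_fstar_eq0 f j (u w : pt K n) (T : seq (pt K n)) m :
  uniq T -> (forall x, x \in T -> on_line u w x) ->
  (forall x, x \in T -> zero_mult f m x) ->
  (msize f - mdeg j <= (m - mdeg j) * size T)%N ->
  peval (hasse j (fstar f)) w = 0.
Proof.
move=> uniq_T on_T mult_T size_f.
have [ls [uniq_ls size_ls] ls_T] := line_params uniq_T on_T.
rewrite /peval -(coef_line_hasse (u 0)).
set P := meval_poly _ _; suff -> : P = 0 by rewrite coef0.
apply: (@eq0_of_dvdp_XsubC_exp _ _ ls (m - mdeg j)) => // [a a_ls|]; last first.
  by rewrite size_ls; apply: leq_trans (size_line_hasse _ _ _ _) size_f.
apply: (@XsubC_exp_dvdp_line _ _ _ (fun l => (u + a *: w) 0 l)) => [l|i lt_i].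
  by rewrite !mxE.
rewrite hasse_comp mevalZ; have := mult_T _ (ls_T _ a_ls) (i + j)%MM.
rewrite /peval => -> //; first by rewrite mulr0.
by rewrite mdegD; lia.
Qed.

Lemma fstar_in_Ir f (r N : nat) (L : lineset K n) (S : seq (pt K n)) :
  (forall u v, L (u, v) ->
     exists T : seq (pt K n), [/\ uniq T, {subset T <= S}, (N <= size T)%N &
        forall x, x \in T -> on_line u v x]) ->
  (msize f <= r * N)%N -> (forall x, x \in S -> zero_mult f (2 * r).-1 x) ->
  in_Ir r L (fstar f).
Proof.
move=> L_inc size_f mult_S; split; first by exists (msize f).-1; apply: fstar_homog.
move=> _ [u [v [c [Luv [c_neq0 ->]]]]] j lt_jr.
have [T [uniq_T T_S N_T on_T]] := L_inc u v Luv.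
apply: (@hasse_fstar_eq0 _ _ u _ T (2 * r).-1) => // [x /on_T [lam ->]|x /T_S/mult_S //|].
  by exists (lam / c); rewrite scalerA mulfVK.
have le_r : (r <= (2 * r).-1 - mdeg j)%N by rewrite -subn1; lia.
by apply: leq_trans (leq_subr _ _) (leq_trans size_f (leq_mul le_r N_T)).
Qed.

End LineRestriction.

Lemma exists_comb_in_kernels (K : fieldType) (V : lmodType K) (C : finType)
    (phi : C -> V -> K) (s : seq V) :
  (forall c, scalar (phi c)) -> (#|C| < size s)%N ->
  exists2 a : 'I_(size s) -> K, exists i, a i != 0 &
    forall c, phi c (\sum_(i < size s) a i *: s`_i) = 0.
Proof.
move=> phi_lin lt_C_s.
pose A : 'M[K]_(size s, #|C|) := \matrix_(i, k) phi (enum_val k) s`_i.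
have ker_neq0 : kermx A != 0.
  rewrite -mxrank_eq0 mxrank_ker subn_eq0 -ltnNge.
  exact: leq_ltn_trans (rank_leq_col A) lt_C_s.
pose x := nz_row (kermx A).
have xA0 : x *m A = 0 by apply/sub_kermxP; apply: nz_row_sub.
exists (fun i => x 0 i).
  apply/existsP; apply: contraR ker_neq0 => /existsPn x0.
  rewrite -nz_row_eq0 -/x; apply/eqP/rowP => i; rewrite mxE.
  by apply/eqP; rewrite -[_ == _]negbK x0.
move=> c; pose phic : {scalar V} :=
  HB.pack (phi c) (GRing.isLinear.Build K V K^o *%R (phi c) (phi_lin c)).
have -> : phi c = phic by [].
transitivity ((x *m A) 0 (enum_rank c)); last by rewrite xA0 mxE.
rewrite linear_sum mxE; apply: eq_bigr => i _.
by rewrite linearZ mxE enum_rankK.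
Qed.

(* Homogenising with a new variable X_0 maps the monomials of degree at most D
   in n variables injectively to the monomials of degree D in n + 1 variables. *)
Lemma card_bmnm_le (n D : nat) : (#|{: 'X_{1..n < D.+1}}| <= 'C(D + n, n))%N.
Proof.
pose homogenize (j : 'X_{1..n < D.+1}) : 'X_{1..n.+1} :=
  [multinom (if unlift ord0 l is Some l' then j l' else (D - mdeg j)%N) | l < n.+1].
have homogenize_lift j l : homogenize j (lift ord0 l) = j l by rewrite mnmE liftK.
have mdeg_homogenize j : mdeg (homogenize j) = D.
  rewrite mdegE big_ord_recl /= mnmE unlift_none.
  under eq_bigr => l _ do rewrite homogenize_lift.
  by rewrite -mdegE; have := bmdeg j; lia.
have homogenize_inj : injective homogenize.
  by move=> j1 j2 e; apply/val_inj/mnmP => l; rewrite -!homogenize_lift e.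
have -> : 'C(D + n, n) = 'C(D + n, D) by rewrite -bin_sub ?leq_addl // addnK.
rewrite cardE -(size_map homogenize) -size_basis.
apply: uniq_leq_size; first by rewrite map_inj_uniq ?enum_uniq.
by move=> m /mapP [j _ ->]; rewrite -basis_cover mdeg_homogenize.
Qed.

Lemma exists_mult_zero_in_subspace (K : fieldType) (n m : nat)
    (U : {mpoly K[n]} -> Prop) (S : seq (pt K n)) (s : seq {mpoly K[n]}) :
  subspace U -> (forall f, f \in s -> U f) -> lin_indep s ->
  ('C(m + n, n) * size S < size s)%N ->
  exists f, [/\ U f, f != 0 & forall x, x \in S -> zero_mult f m.+1 x].
Proof.
move=> [U0 U_comb] s_U indep_s lt_s.
pose C := ('I_(size S) * 'X_{1..n < m.+1})%type.
pose phi (c : C) g := peval (hasse c.2 g) S`_c.1.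
have [|a [i a_neq0] ker_a] :=
  @exists_comb_in_kernels _ _ _ phi s (fun c => peval_hasse_is_scalar _ _).
  rewrite card_prod card_ord; apply: leq_ltn_trans lt_s.
  by rewrite mulnC leq_mul2r card_bmnm_le orbT.
exists (\sum_(i < size s) a i *: s`_i); split.
- elim/big_rec: _ => [|k g _ Ug]; first exact: U0.
  by apply: U_comb => //; apply/s_U/mem_nth.
- by apply: contraNneq a_neq0 => /indep_s ->.
move=> x x_S j lt_j.
have lt_xS : (index x S < size S)%N by rewrite index_mem.
have := ker_a (Ordinal lt_xS, BMultinom lt_j).
by rewrite /phi /= nth_index.
Qed.

Theorem theorem3p1 (K : fieldType) (n N r : nat)
  (hn : (2 <= n)%N) (hN : (0 < N)%N) (hr : (0 < r)%N)
  (L : lineset K n)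
  (hL : forall u v, L (u, v) -> v != 0)
  (S : seq (pt K n)) (hS : uniq S)
  (hinc : forall u v, L (u, v) ->
     exists T : seq (pt K n), [/\ uniq T, {subset T <= S}, (N <= size T)%N &
        forall x, x \in T -> on_line u v x])
  (U : {mpoly K[n]} -> Prop)
  (hU : subspace U)
  (hdeg : forall f, U f -> (msize f <= r * N)%N)
  (hstar : forall f, U f -> f != 0 -> ~ in_Ir r L (fstar f)) :
  dim_le U ('C(2 * r + n - 2, n) * size S)%N.
Proof.
move=> s s_U indep_s; rewrite leqNgt; apply/negP => lt_s.
have [|f [Uf f_neq0 mult_f]] :=
  @exists_mult_zero_in_subspace _ _ (2 * r - 2) U S s hU s_U indep_s.
  by rewrite (_ : 2 * r - 2 + n = 2 * r + n - 2)%N //; lia.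
apply: (hstar f Uf f_neq0); apply: (fstar_in_Ir hinc (hdeg f Uf)) => x /mult_f.
by rewrite (_ : (2 * r).-1 = (2 * r - 2).+1)%N //; lia.
Qed.
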